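(* Let $E$ and $F$ be disjoint finite sets, and let $S\subseteq 2^E$ and $T\subseteq 2^F$ be powerful sets. Define the direct sum $S\oplus T=\{X\cup Y : X\in S,\ Y\in T\}\subseteq 2^{E\cup F}$. Then $\mathcal{C}(S\oplus T)=\mathcal{C}(S)\cup\mathcal{C}(T)$.
   Context: For a finite set $E$, a set $S\subseteq 2^E$ is powerful if for every $X\subseteq E$ the number of members of $S$ that are subsets of $X$ is a power of $2$ (in particular $\emptyset\in S$). For a powerful set $S$, $\mathcal{C}(S)$ denotes the set of cocircuits of $S$, i.e. the minimal (under inclusion) nonempty members of $S$. *)

From mathcomp Require Import all_boot.
Set Implicit Arguments. Unset Strict Implicit. Unset Printing Implicit Defensive.

(* Subsets of a ground finite set E are modelled as sets over an ambient
   finType U contained in E; a family S \subseteq 2^E is a {set {set U}}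
   all of whose members are subsets of E. *)

Definition family_on (U : finType) (E : {set U}) (S : {set {set U}}) : bool :=
  S \subset powerset E.

Definition powerful (U : finType) (E : {set U}) (S : {set {set U}}) : Prop :=
  family_on E S /\
  forall X : {set U}, X \subset E ->
    exists k : nat, #|[set Y in S | Y \subset X]| = 2 ^ k.

Definition cocircuits (U : finType) (S : {set {set U}}) : {set {set U}} :=
  [set C in S | (C != set0) &&
     [forall D in S, (D != set0) && (D \subset C) ==> (D == C)]].

Definition dsum (U : finType) (S T : {set {set U}}) : {set {set U}} :=
  [set X :|: Y | X in S, Y in T].

From mathcomp Require Import all_boot.
Set Implicit Arguments. Unset Strict Implicit.

(* Then S and T sit inside S (+) T, so a minimal nonempty
   member of S (+) T that lies in S or T is a cocircuit there; and a member
   X :|: Y of S (+) T below a cocircuit C of S has Y contained in both E and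
   F, hence empty, so it is a member of S below C. *)

Section Cocircuits.
Variable U : finType.
Implicit Types (E F C D X Y : {set U}) (S T : {set {set U}}).

Lemma powerful_set0 E S : powerful E S -> set0 \in S.
Proof.
case=> _ /(_ set0 (sub0set _)) [k count_set0].
apply/negPn/negP => S0.
suff no_member : [set Y in S | Y \subset set0] = set0.
  by move: count_set0; rewrite no_member cards0 => /esym/eqP; rewrite expn_eq0.
by apply/setP => Y; rewrite !inE subset0; apply: contraNF S0 => /andP[? /eqP <-].
Qed.

Lemma family_on_sub E S Y : family_on E S -> Y \in S -> Y \subset E.
Proof. by move=> /subsetP SE /SE; rewrite powersetE. Qed.

Lemma cocircuitsP S C :
  reflect [/\ C \in S, C != set0 &
             forall D, D \in S -> D != set0 -> D \subset C -> D = C]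
          (C \in cocircuits S).
Proof.
rewrite inE; apply: (iffP and3P) => [[SC C0 /forallP minC]|[SC C0 minC]].
  by split=> // D SD D0 DC; apply/eqP; move: (minC D); rewrite SD D0 DC.
split=> //; apply/forallP => D; apply/implyP => SD; apply/implyP => /andP[D0 DC].
by rewrite (minC D).
Qed.

Lemma cocircuits_sub S T C :
  S \subset T -> C \in S -> C \in cocircuits T -> C \in cocircuits S.
Proof.
move=> /subsetP ST SC /cocircuitsP[_ C0 minC]; apply/cocircuitsP.
by split=> // D SD; apply: minC (ST D SD).
Qed.

Lemma dsumC S T : dsum S T = dsum T S.
Proof.
by apply/setP => Z; apply/imset2P/imset2P => -[X Y SX TY ->]; exists Y X;
  rewrite // setUC.
Qed.

Lemma mem_dsum S T X Y : X \in S -> Y \in T -> X :|: Y \in dsum S T.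
Proof. by move=> SX TY; apply/imset2P; exists X Y. Qed.

Lemma sub_dsuml S T : set0 \in T -> S \subset dsum S T.
Proof. by move=> T0; apply/subsetP => X SX; rewrite -[X]setU0 mem_dsum. Qed.

Lemma sub_dsumr S T : set0 \in S -> T \subset dsum S T.
Proof. by move=> S0; rewrite dsumC; apply: sub_dsuml. Qed.

Lemma cocircuits_dsum_sub S T : set0 \in S -> set0 \in T ->
  cocircuits (dsum S T) \subset cocircuits S :|: cocircuits T.
Proof.
move=> S0 T0; apply/subsetP => C cocC; rewrite inE.
have /cocircuitsP[/imset2P[X Y SX TY defC] _ minC] := cocC.
have [X0 | X0] := eqVneq X set0.
  rewrite (@cocircuits_sub T (dsum S T)) ?orbT ?sub_dsumr //.
  by rewrite defC X0 set0U.
have XC : X = C by apply: minC; rewrite ?defC ?subsetUl // (subsetP (sub_dsuml S T0)).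
by rewrite (@cocircuits_sub S (dsum S T)) ?sub_dsuml // -XC.
Qed.

Lemma cocircuits_sub_dsuml E F S T :
  [disjoint E & F] -> family_on E S -> family_on F T -> set0 \in T ->
  cocircuits S \subset cocircuits (dsum S T).
Proof.
move=> dEF famS famT T0; apply/subsetP => C /cocircuitsP[SC C0 minC].
apply/cocircuitsP; split=> //; first by rewrite (subsetP (sub_dsuml S T0)).
move=> _ /imset2P[X Y SX TY ->] D0 DC.
have YEF : Y \subset E :&: F.
  rewrite subsetI (family_on_sub famT TY) andbT.
  exact: subset_trans (subsetUr X Y) (subset_trans DC (family_on_sub famS SC)).
have Y0 : Y = set0 by apply/eqP; rewrite -subset0 -(disjoint_setI0 dEF).
by move: D0 DC; rewrite Y0 setU0; apply: minC.
Qed.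

End Cocircuits.

Theorem theorem2 (U : finType) (E F : {set U}) (S T : {set {set U}}) :
  [disjoint E & F] ->
  powerful E S -> powerful F T ->
  cocircuits (dsum S T) = cocircuits S :|: cocircuits T.
Proof.
move=> dEF powS powT.
have [[famS _] [famT _]] := (powS, powT).
have [S0 T0] := (powerful_set0 powS, powerful_set0 powT).
apply/eqP; rewrite eqEsubset cocircuits_dsum_sub // subUset.
rewrite (cocircuits_sub_dsuml dEF famS famT T0) dsumC.
by rewrite (cocircuits_sub_dsuml _ famT famS S0) // disjoint_sym.
Qed.
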